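(* Let $M$ be a finite regular cell complex with weights $w_\sigma>0$ on its cells, and let $d\ge 1$. For every combinatorial differential $d$-form $\omega\in\Omega^d(M)$, $$d^*\omega = p\big(\partial^*\circ\omega - (-1)^{d-1}\,\omega\circ\partial^*\big),$$ where $p$ is the orthogonal projection from the space of linear maps $C_*(M)\to C_*(M)$ of degree $d-1$ onto $\Omega^{d-1}(M)$.
   Context: $C_*(M)=\bigoplus_p C_p(M)$ is the real cellular chain complex of $M$ with boundary $\partial$, each cell carrying a fixed orientation; $C_p(M)=0$ for $p<0$ or $p>\dim M$. Inner product on $C_*(M)$: $\langle\sigma,\sigma'\rangle=\delta_{\sigma,\sigma'}w_\sigma$ for oriented cells $\sigma,\sigma'$; $\partial^*$ is the adjoint of $\partial$ with respect to it. A linear map $\omega:C_*(M)\to C_*(M)$ has degree $d$ if $\omega(C_p(M))\subset C_{p-d}(M)$ for all $p$; it is local if for each oriented $p$-cell $\alpha$, $\omega(\alpha)$ is a linear combination of $(p-d)$-cells that are faces of $\alpha$. $\Omega^d(M)$ is the space of local linear maps of degree $d$ (combinatorial differential $d$-forms). On linear maps of degree $d$ define the $L^2$ inner product $\langle u,v\rangle=\sum_\sigma \frac{1}{w_\sigma}\langle u(\sigma),v(\sigma)\rangle$ (sum over all cells). The differential $d:\Omega^{d-1}(M)\to\Omega^{d}(M)$ is $dv=\partial\circ v-(-1)^{d-1}v\circ\partial$, and $d^*:\Omega^d(M)\to\Omega^{d-1}(M)$ is its adjoint: $\langle d^*u,v\rangle=\langle u,dv\rangle$ for all $u\in\Omega^d(M)$,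 $v\in\Omega^{d-1}(M)$. *)

From mathcomp Require Import all_boot all_order all_algebra.
Set Implicit Arguments. Unset Strict Implicit. Unset Printing Implicit Defensive.
Import Order.TTheory GRing.Theory Num.Theory.
Local Open Scope ring_scope.

(* Cells of M are indexed by 'I_n.  A linear map u : C_*(M) -> C_*(M) is
   represented by its coefficient matrix U : 'M[R]_n, in column convention:
   U tau sigma = coefficient of the oriented cell tau in u(sigma).
   Composition u \o v is U *m V; chains are column vectors 'cV_n. *)

Section CellComplex.
Variables (R : realFieldType) (n : nat).
Implicit Types (U V : 'M[R]_n) (x y : 'cV[R]_n).

Definition chain_ip (w : 'I_n -> R) x y : R := \sum_i w i * x i 0 * y i 0.

Definition map_ip (w : 'I_n -> R) U V : R :=
  \sum_s (w s)^-1 * chain_ip w (col s U) (col s V).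

(* U has degree k : maps C_p into C_{p-k} (C_q = 0 for q < 0). *)
Definition has_degree (dim : 'I_n -> nat) (k : nat) U : Prop :=
  forall t s, U t s != 0 -> (dim t + k)%N = dim s.

(* U is local of degree k (an element of Omega^k(M)); face t s means
   "t is a face of s" (reflexive face relation of the face poset). *)
Definition is_form (dim : 'I_n -> nat) (face : rel 'I_n) (k : nat) U : Prop :=
  forall t s, U t s != 0 -> face t s /\ (dim t + k)%N = dim s.

(* Combinatorial data of a finite regular cell complex: face poset graded by
   dimension, boundary matrix B (B t s = incidence number [s : t]) with
   incidence numbers +-1 exactly on codimension-one faces, and B o B = 0. *)
Definition regular_cell_complex (dim : 'I_n -> nat) (face : rel 'I_n) (B : 'M[R]_n)
  : Prop :=
  [/\ [/\ reflexive face, antisymmetric face & transitive face],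
      (forall t s, face t s -> t != s -> (dim t < dim s)%N),
      (forall t s, B t s != 0 -> face t s /\ (dim t).+1 = dim s),
      (forall t s, face t s -> (dim t).+1 = dim s -> B t s = 1 \/ B t s = -1)
    & B *m B = 0].

Definition dform (B : 'M[R]_n) (k : nat) V : 'M[R]_n :=
  B *m V - (-1) ^+ k.-1 *: (V *m B).

End CellComplex.

From mathcomp Require Import all_boot all_order all_algebra.
From mathcomp Require Import ring zify.
Set Implicit Arguments. Unset Strict Implicit. Unset Printing Implicit Defensive.
Import Order.TTheory GRing.Theory Num.Theory.
Local Open Scope ring_scope.

(* Since del^* is the adjoint of del, left and right composition with del^* are
   the L^2-adjoints of left and right composition with del; for the right one,
   transpose: transposition turns right into left composition and swaps the
   weights w for 1/w, under which del^T and del^*^T are again adjoint.  Hence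
   del^* o omega - (-1)^(d-1) omega o del^* is a map of degree d-1 whose pairing
   with every form v is <omega, dv> = <d^* omega, v>.  Projecting onto
   Omega^(d-1) does not change these pairings, and two forms of Omega^(d-1)
   with the same pairings against all of Omega^(d-1) coincide. *)

Section CellComplexAdjoints.
Variables (R : realFieldType) (n : nat).
Implicit Types (w : 'I_n -> R) (A As U V W : 'M[R]_n) (x y : 'cV[R]_n).

Definition chain_adjoint w A As :=
  forall x y, chain_ip w (As *m x) y = chain_ip w x (A *m y).

Lemma chain_ipC w x y : chain_ip w x y = chain_ip w y x.
Proof. by apply: eq_bigr => i _; rewrite mulrAC. Qed.

Lemma chain_ip_deltar w x i : chain_ip w x (delta_mx i 0) = w i * x i 0.
Proof.
rewrite /chain_ip (bigD1 i) //= big1 => [|j /negbTE ji]; rewrite mxE ?ji ?mulr0 //.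
by rewrite !eqxx mulr1 addr0.
Qed.

Lemma chain_adjointP w A As :
  chain_adjoint w A As <-> forall i j, w i * As i j = w j * A j i.
Proof.
split=> [adj i j | adj x y].
  have := adj (delta_mx j 0) (delta_mx i 0).
  by rewrite chain_ip_deltar chain_ipC chain_ip_deltar -!colE !mxE.
rewrite /chain_ip.
under eq_bigr => i _ do rewrite mxE mulr_sumr mulr_suml.
under [RHS]eq_bigr => j _ do rewrite mxE mulr_sumr.
rewrite exchange_big; apply: eq_bigr => j _; apply: eq_bigr => i _ /=.
by rewrite mulrA adj; ring.
Qed.

Lemma chain_adjoint_entry_neq0 w A As i j :
  w i != 0 -> chain_adjoint w A As -> As i j != 0 -> A j i != 0.
Proof.
move=> wi_neq0 /chain_adjointP adj; apply: contra_neq => Aji0.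
by apply: (mulfI wi_neq0); rewrite adj Aji0 !mulr0.
Qed.

Lemma chain_adjoint_trmx w A As : (forall i, w i != 0) ->
  chain_adjoint w A As -> chain_adjoint (fun i => (w i)^-1) A^T As^T.
Proof.
move=> w_neq0 /chain_adjointP adj; apply/chain_adjointP => i j; rewrite !mxE.
have -> : As j i = w i * A i j / w j by rewrite -adj mulrC mulKf.
by field; rewrite !w_neq0.
Qed.

Lemma map_ipE w U V :
  map_ip w U V = \sum_s \sum_i (w s)^-1 * (w i * U i s * V i s).
Proof.
apply: eq_bigr => s _; rewrite mulr_sumr.
by apply: eq_bigr => i _; rewrite !mxE.
Qed.

Lemma map_ipC w U V : map_ip w U V = map_ip w V U.
Proof. by apply: eq_bigr => s _; rewrite chain_ipC. Qed.

Lemma map_ipBl w U U' V :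
  map_ip w (U - U') V = map_ip w U V - map_ip w U' V.
Proof.
rewrite !map_ipE -sumrB; apply: eq_bigr => s _; rewrite -sumrB.
by apply: eq_bigr => i _; rewrite !mxE; ring.
Qed.

Lemma map_ipZl w a U V : map_ip w (a *: U) V = a * map_ip w U V.
Proof.
rewrite !map_ipE mulr_sumr; apply: eq_bigr => s _; rewrite mulr_sumr.
by apply: eq_bigr => i _; rewrite !mxE; ring.
Qed.

Lemma map_ipBr w U V V' :
  map_ip w U (V - V') = map_ip w U V - map_ip w U V'.
Proof. by rewrite map_ipC map_ipBl !(map_ipC _ U). Qed.

Lemma map_ipZr w a U V : map_ip w U (a *: V) = a * map_ip w U V.
Proof. by rewrite map_ipC map_ipZl map_ipC. Qed.

Lemma map_ip_trmx w U V :
  map_ip w U V = map_ip (fun i => (w i)^-1) U^T V^T.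
Proof.
rewrite !map_ipE [RHS]exchange_big; apply: eq_bigr => s _.
by apply: eq_bigr => i _; rewrite !mxE invrK; ring.
Qed.

Lemma map_ip_self_eq0 w U : (forall i, 0 < w i) -> map_ip w U U = 0 -> U = 0.
Proof.
rewrite map_ipE => w_gt0 U0.
have w_ge0 i : 0 <= w i by exact: ltW.
have term_ge0 s i : 0 <= (w s)^-1 * (w i * U i s * U i s).
  by rewrite -mulrA -expr2 mulr_ge0 ?invr_ge0 // mulr_ge0 ?sqr_ge0.
have col_ge0 s : 0 <= \sum_i (w s)^-1 * (w i * U i s * U i s).
  by apply: sumr_ge0 => i _.
apply/matrixP => i s; rewrite mxE.
have col_s0 := psumr_eq0P (fun s _ => col_ge0 s) U0 (i := s) isT.
have /eqP := psumr_eq0P (fun i _ => term_ge0 s i) col_s0 (i := i) isT.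
by rewrite !mulf_eq0 invr_eq0 !(gt_eqF (w_gt0 _)) /= orbb => /eqP.
Qed.

Lemma map_ip_mull w A As : chain_adjoint w A As ->
  forall U V, map_ip w U (A *m V) = map_ip w (As *m U) V.
Proof. by move=> adj U V; apply: eq_bigr => s _; rewrite !colE -!mulmxA adj. Qed.

Lemma map_ip_mulr w A As : (forall i, w i != 0) -> chain_adjoint w A As ->
  forall U V, map_ip w U (V *m A) = map_ip w (U *m As) V.
Proof.
move=> w_neq0 adj U V; rewrite [LHS]map_ip_trmx [RHS]map_ip_trmx !trmx_mul.
by rewrite (map_ip_mull (chain_adjoint_trmx w_neq0 adj)).
Qed.

Lemma map_ip_dform w A As k : (forall i, w i != 0) -> chain_adjoint w A As ->
  forall U V, map_ip w U (dform A k V) = map_ip w (dform As k U) V.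
Proof.
move=> w_neq0 adj U V.
by rewrite map_ipBr map_ipZr map_ipBl map_ipZl (map_ip_mull adj) (map_ip_mulr w_neq0 adj).
Qed.

Lemma mulmx_entry_neq0 U V i j :
  (U *m V) i j != 0 -> exists2 k, U i k != 0 & V k j != 0.
Proof.
case: (pickP (fun k => (U i k != 0) && (V k j != 0))) => [k /andP[]|none].
  by exists k.
rewrite mxE big1 ?eqxx // => k _.
by move/negbT: (none k); rewrite negb_and !negbK => /orP[]/eqP->; rewrite ?mul0r ?mulr0.
Qed.

Lemma subr_entry_neq0 U V i j : (U - V) i j != 0 -> U i j != 0 \/ V i j != 0.
Proof.
rewrite !mxE; have [->|] := eqVneq (U i j) 0; last by left.
by rewrite sub0r oppr_eq0; right.
Qed.

Lemma scale_entry_neq0 a U i j : (a *: U) i j != 0 -> U i j != 0.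
Proof. by rewrite mxE mulf_eq0 negb_or => /andP[]. Qed.

Section Degree.
Variable dim : 'I_n -> nat.

Lemma has_degreeB k U V :
  has_degree dim k U -> has_degree dim k V -> has_degree dim k (U - V).
Proof. by move=> hU hV t s /subr_entry_neq0[/hU | /hV]. Qed.

Lemma has_degreeZ k a U : has_degree dim k U -> has_degree dim k (a *: U).
Proof. by move=> hU t s /scale_entry_neq0/hU. Qed.

Lemma is_formB face k U V :
  is_form dim face k U -> is_form dim face k V -> is_form dim face k (U - V).
Proof. by move=> hU hV t s /subr_entry_neq0[/hU | /hV]. Qed.

Lemma is_form_has_degree face k U : is_form dim face k U -> has_degree dim k U.
Proof. by move=> hU t s /hU[]. Qed.

Lemma form_eq_by_map_ip w face k U V : (forall i, 0 < w i) ->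
  is_form dim face k U -> is_form dim face k V ->
  (forall W, is_form dim face k W -> map_ip w U W = map_ip w V W) -> U = V.
Proof.
move=> w_gt0 hU hV eqUV; apply/subr0_eq/(map_ip_self_eq0 w_gt0).
by rewrite map_ipBl eqUV ?subrr //; apply: is_formB.
Qed.

Variables (w : 'I_n -> R) (A As : 'M[R]_n).
Hypotheses (w_neq0 : forall i, w i != 0) (adj : chain_adjoint w A As).
Hypothesis A_deg : has_degree dim 1 A.

Lemma adjoint_mull_has_degree k U :
  has_degree dim k.+1 U -> has_degree dim k (As *m U).
Proof.
move=> U_deg t s /mulmx_entry_neq0[j /(chain_adjoint_entry_neq0 (w_neq0 t) adj)].
by move=> /A_deg A_jt /U_deg U_js; lia.
Qed.

Lemma adjoint_mulr_has_degree k U :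
  has_degree dim k.+1 U -> has_degree dim k (U *m As).
Proof.
move=> U_deg t s /mulmx_entry_neq0[j /U_deg U_tj].
by move=> /(chain_adjoint_entry_neq0 (w_neq0 j) adj)/A_deg A_sj; lia.
Qed.

Lemma dform_adjoint_has_degree k U :
  has_degree dim k.+1 U -> has_degree dim k (dform As k.+1 U).
Proof.
move=> U_deg; apply: has_degreeB; first exact: adjoint_mull_has_degree.
by apply: has_degreeZ; apply: adjoint_mulr_has_degree.
Qed.

End Degree.

End CellComplexAdjoints.

Theorem lemma2p4 (R : realFieldType) (n : nat)
  (dim : 'I_n -> nat) (face : rel 'I_n) (B : 'M[R]_n) (w : 'I_n -> R)
  (HM : regular_cell_complex dim face B)
  (Hw : forall s, 0 < w s)
  (d : nat) (hd : (1 <= d)%N)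
  (* Bs is the adjoint del^* of del w.r.t. the weighted inner product *)
  (Bs : 'M[R]_n)
  (HBs : forall x y : 'cV[R]_n, chain_ip w (Bs *m x) y = chain_ip w x (B *m y))
  (* dstar is the adjoint d^* : Omega^d -> Omega^{d-1} of d *)
  (dstar : 'M[R]_n -> 'M[R]_n)
  (Hdstar : forall U, is_form dim face d U ->
     is_form dim face d.-1 (dstar U) /\
     forall V, is_form dim face d.-1 V ->
       map_ip w (dstar U) V = map_ip w U (dform B d V))
  (* p is the orthogonal projection of degree-(d-1) maps onto Omega^{d-1} *)
  (p : 'M[R]_n -> 'M[R]_n)
  (Hp : forall U, has_degree dim d.-1 U ->
     is_form dim face d.-1 (p U) /\
     forall V, is_form dim face d.-1 V -> map_ip w (U - p U) V = 0)
  (omega : 'M[R]_n) (Homega : is_form dim face d omega) :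
  dstar omega = p (Bs *m omega - (-1) ^+ d.-1 *: (omega *m Bs)).
Proof.
have w_neq0 s : w s != 0 by rewrite gt_eqF.
have B_deg : has_degree dim 1 B.
  by case: HM => _ _ B_face _ _ t s /B_face[_]; rewrite addn1.
change (dstar omega = p (dform Bs d omega)).
case: d hd Hdstar Hp Homega => // d _ Hdstar Hp Homega.
have X_deg := dform_adjoint_has_degree w_neq0 HBs B_deg (is_form_has_degree Homega).
have [pX_form pX_orth] := Hp _ X_deg.
have [dstar_form dstar_adj] := Hdstar _ Homega.
apply: (form_eq_by_map_ip Hw dstar_form pX_form) => V V_form.
rewrite dstar_adj // (map_ip_dform _ w_neq0 HBs).
by apply/eqP; rewrite -subr_eq0 -map_ipBl pX_orth.
Qed.
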